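(* Let $\Omega\subset\mathbb{R}^N$ be an open domain, let $g:\mathbb{R}^N\setminus\Omega\to\mathbb{R}$ be bounded, and let $\mathcal{A}:\Omega\times\mathcal{X}\times\mathbb{R}\to\mathbb{R}$ satisfy assumptions (a), (b), (c) below. Consider the DPP with boundary values $$\mathcal{A}(x,u,u(x))=0 \ (x\in\Omega),\qquad u(x)=g(x)\ (x\in\mathbb{R}^N\setminus\Omega). \tag{DPP}$$ Assume that either (H1) there exists at least one viscosity subsolution of (DPP), and (H2) all viscosity subsolutions of (DPP) are uniformly bounded from above (i.e. there is $M\in\mathbb{R}$ with $v\le M$ on $\mathbb{R}^N$ for every viscosity subsolution $v$); or (H1* ) there exists at least one viscosity supersolution of (DPP), and (H2* ) all viscosity supersolutions of (DPP) are uniformly bounded from below. Then there exists at least one viscosity solution of (DPP).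
   Context: $\overline{\mathcal{X}}$ denotes the set of bounded functions $f:\mathbb{R}^N\to\mathbb{R}$, and $\mathcal{X}\subset\overline{\mathcal{X}}$ is a fixed subset. Assumptions on $\mathcal{A}$: (a) $\mathcal{A}$ is nonincreasing in the second variable: for all $(x,s)$ and all $\varphi_1,\varphi_2\in\mathcal{X}$ with $\varphi_1\le\varphi_2$ on $\mathbb{R}^N$, $\mathcal{A}(x,\varphi_2,s)\le\mathcal{A}(x,\varphi_1,s)$; (b) $\mathcal{A}$ is nondecreasing in the third variable: for all $(x,\varphi)$ and $s_1\le s_2$, $\mathcal{A}(x,\varphi,s_1)\le\mathcal{A}(x,\varphi,s_2)$; (c) for every $(x,\varphi)$ the map $s\mapsto\mathcal{A}(x,\varphi,s)$ has exactly one zero. Viscosity solutions of (DPP): $u\in\overline{\mathcal{X}}$ is a viscosity supersolution if $u(x)\ge g(x)$ for all $x\in\mathbb{R}^N\setminus\Omega$ and, for every $x\in\Omega$, $\mathcal{A}(x,\varphi,u(x))\ge0$ for all $\varphi\in\mathcal{X}$ with $\varphi\le u$ on $\mathbb{R}^N$. $u\in\overline{\mathcal{X}}$ is a viscosity subsolution if $u(x)\le g(x)$ for all $x\in\mathbb{R}^N\setminus\Omega$ and, for every $x\in\Omega$, $\mathcal{A}(x,\varphi,u(x))\le0$ for all $\varphi\in\mathcal{X}$ with $\varphi\ge u$ on $\mathbb{R}^N$. A viscosity solution is a function $u\in\overline{\mathcal{X}}$ that is both a viscosity subsolution and a viscosity supersolution. *)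

From HB Require Import structures.
From mathcomp Require Import all_boot all_order all_algebra.
From mathcomp Require Import all_classical all_reals all_analysis.
Set Implicit Arguments. Unset Strict Implicit. Unset Printing Implicit Defensive.
Import Order.TTheory GRing.Theory Num.Theory.
Import numFieldNormedType.Exports.
Local Open Scope classical_set_scope.
Local Open Scope ring_scope.

Section DPP.
Variables (R : realType) (N : nat).
Notation pt := 'rV[R]_N.

Definition bdd_fun (f : pt -> R) : Prop := exists M : R, forall x, `|f x| <= M.

Definition A_noninc2 (Omega : set pt) (X : set (pt -> R))
  (A : pt -> (pt -> R) -> R -> R) : Prop :=
  forall x s phi1 phi2, Omega x -> X phi1 -> X phi2 ->
    (forall y, phi1 y <= phi2 y) -> A x phi2 s <= A x phi1 s.

Definition A_nondecr3 (Omega : set pt) (X : set (pt -> R))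
  (A : pt -> (pt -> R) -> R -> R) : Prop :=
  forall x phi s1 s2, Omega x -> X phi -> s1 <= s2 -> A x phi s1 <= A x phi s2.

Definition A_unique_zero (Omega : set pt) (X : set (pt -> R))
  (A : pt -> (pt -> R) -> R -> R) : Prop :=
  forall x phi, Omega x -> X phi -> exists! s, A x phi s = 0.

Definition visc_supersol (Omega : set pt) (X : set (pt -> R))
  (A : pt -> (pt -> R) -> R -> R) (g : pt -> R) (u : pt -> R) : Prop :=
  bdd_fun u /\
  (forall x, ~ Omega x -> g x <= u x) /\
  (forall x, Omega x -> forall phi, X phi -> (forall y, phi y <= u y) ->
     0 <= A x phi (u x)).

Definition visc_subsol (Omega : set pt) (X : set (pt -> R))
  (A : pt -> (pt -> R) -> R -> R) (g : pt -> R) (u : pt -> R) : Prop :=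
  bdd_fun u /\
  (forall x, ~ Omega x -> u x <= g x) /\
  (forall x, Omega x -> forall phi, X phi -> (forall y, u y <= phi y) ->
     A x phi (u x) <= 0).

Definition visc_sol Omega X A g u : Prop :=
  visc_subsol Omega X A g u /\ visc_supersol Omega X A g u.

End DPP.

(** Perron's method. The pointwise supremum u of all subsolutions is again a
    subsolution, because the subsolution inequality at x only bounds u(x) by the
    unique zero of s |-> A(x, phi, s). It is also a supersolution: where that
    fails, raising u at a single point to the zero (or to the boundary datum)
    yields a subsolution strictly above u at that point, contradicting
    maximality. The starred hypotheses reduce to the unstarred ones by the
    symmetry u |-> -u, A(x, phi, s) |-> -A(x, -phi, -s), g |-> -g. *)

From mathcomp Require Import all_boot all_order all_algebra.
From mathcomp Require Import all_classical all_reals all_analysis.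
From mathcomp Require Import lra.
Import Order.TTheory GRing.Theory Num.Theory.
Import numFieldNormedType.Exports.
Set Implicit Arguments. Unset Strict Implicit.
Local Open Scope classical_set_scope.
Local Open Scope ring_scope.

Section BoundedFunctions.
Variables (R : realType) (N : nat).
Implicit Types (f l h : 'rV[R]_N -> R).

Lemma bdd_funN f : bdd_fun (- f) <-> bdd_fun f.
Proof.
by split=> -[M fM]; exists M => y; have := fM y; rewrite ?normrN.
Qed.

Lemma bdd_fun_sandwich f l h : bdd_fun l -> bdd_fun h ->
  (forall y, l y <= f y <= h y) -> bdd_fun f.
Proof.
move=> [Ml lM] [Mh hM] lfh; exists (Ml + Mh) => y.
move: (lM y) (hM y) (lfh y); rewrite !ler_norml => /andP[? ?] /andP[? ?] /andP[? ?].
by apply/andP; split; lra.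
Qed.

Lemma bdd_fun_update f x c : bdd_fun f -> bdd_fun [eta f with x |-> c].
Proof.
move=> [M fM]; exists (M + `|c|) => y /=.
have M_ge0 : 0 <= M := le_trans (normr_ge0 _) (fM x).
by case: eqP => _; [rewrite lerDr | rewrite (le_trans (fM y)) // lerDl].
Qed.

End BoundedFunctions.

Section UniqueZero.
Variables (R : realType) (N : nat) (Omega : set 'rV[R]_N) (X : set ('rV[R]_N -> R)).
Variable A : 'rV[R]_N -> ('rV[R]_N -> R) -> R -> R.
Hypotheses (A_nondecr : A_nondecr3 Omega X A) (A_zero : A_unique_zero Omega X A).
Variables (x : 'rV[R]_N) (phi : 'rV[R]_N -> R) (s : R).
Hypotheses (Omega_x : Omega x) (X_phi : X phi) (A_s : A x phi s = 0).

Lemma A_zero_uniq r : A x phi r = 0 -> r = s.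
Proof.
by have [t [_ tE]] := A_zero Omega_x X_phi => /tE <-; apply: tE.
Qed.

Lemma A_le0E r : (A x phi r <= 0) = (r <= s).
Proof.
apply/idP/idP => [Ar_le0 | le_rs]; last by rewrite -A_s; apply: A_nondecr.
rewrite leNgt; apply/negP => lt_sr.
have Ar_ge0 : 0 <= A x phi r by rewrite -A_s; apply: A_nondecr => //; apply: ltW.
have /A_zero_uniq r_eq : A x phi r = 0 by apply/eqP; rewrite eq_le Ar_le0.
by rewrite r_eq ltxx in lt_sr.
Qed.

Lemma A_ge0E r : (0 <= A x phi r) = (s <= r).
Proof.
apply/idP/idP => [A_ge0 | le_sr]; last by rewrite -A_s; apply: A_nondecr.
rewrite leNgt; apply/negP => lt_rs.
have Ar_le0 : A x phi r <= 0 by rewrite A_le0E ltW.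
have /A_zero_uniq r_eq : A x phi r = 0 by apply/eqP; rewrite eq_le Ar_le0.
by rewrite r_eq ltxx in lt_rs.
Qed.

End UniqueZero.

Section Perron.
Variables (R : realType) (N : nat) (Omega : set 'rV[R]_N) (X : set ('rV[R]_N -> R)).
Variables (A : 'rV[R]_N -> ('rV[R]_N -> R) -> R -> R) (g : 'rV[R]_N -> R).
Local Notation subsol := (visc_subsol Omega X A g).

Lemma subsol_update u x c : subsol u -> u x <= c ->
  (~ Omega x -> c <= g x) ->
  (Omega x -> forall psi, X psi -> (forall y, u y <= psi y) -> A x psi c <= 0) ->
  subsol [eta u with x |-> c].
Proof.
move=> [u_bdd [u_out u_in]] ux_le_c c_out c_in.
have u_le_w y : u y <= [eta u with x |-> c] y by rewrite /=; case: eqP => [->|].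
split; first exact: bdd_fun_update.
have u_le_psi psi : (forall y, [eta u with x |-> c] y <= psi y) -> forall y, u y <= psi y.
  by move=> w_le_psi y; apply: le_trans (u_le_w y) (w_le_psi y).
split=> y /=; case: eqP => [-> | _]; [exact: c_out | exact: u_out | |].
  by move=> x_in psi X_psi /u_le_psi; apply: c_in.
by move=> y_in psi X_psi /u_le_psi; apply: u_in.
Qed.

Definition perron x := sup [set v x | v in subsol].

Hypotheses (A_noninc : A_noninc2 Omega X A) (A_nondecr : A_nondecr3 Omega X A)
  (A_zero : A_unique_zero Omega X A).
Variables (v0 : 'rV[R]_N -> R) (M : R).
Hypotheses (subsol_v0 : subsol v0) (subsol_le : forall v, subsol v -> forall y, v y <= M).

Lemma perron_ge v x : subsol v -> v x <= perron x.
Proof.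
move=> subsol_v; apply: sup_upper_bound; last by exists v.
by split; [exists (v0 x), v0 | exists M => _ [w subsol_w <-]; apply: subsol_le].
Qed.

Lemma perron_le x c : (forall v, subsol v -> v x <= c) -> perron x <= c.
Proof.
by move=> le_c; apply: ge_sup; [exists (v0 x), v0 | move=> _ [v subsol_v <-]; apply: le_c].
Qed.

Lemma perron_subsol : subsol perron.
Proof.
split.
  apply: (@bdd_fun_sandwich _ _ _ v0 (cst M)); first exact: subsol_v0.1.
    by exists `|M|.
  by move=> y; rewrite perron_ge //=; apply: perron_le => v /subsol_le.
split=> [x x_out | x x_in phi X_phi perron_le_phi].
  by apply: perron_le => v [_ [v_out _]]; apply: v_out.
have [s [A_s _]] := A_zero x_in X_phi.
rewrite (A_le0E A_nondecr A_zero x_in X_phi A_s).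
apply: perron_le => v subsol_v.
rewrite -(A_le0E A_nondecr A_zero x_in X_phi A_s).
by apply: subsol_v.2.2 => // y; apply: le_trans (perron_ge y subsol_v) (perron_le_phi y).
Qed.

Lemma perron_maximal x c : perron x <= c -> (~ Omega x -> c <= g x) ->
  (Omega x -> forall psi, X psi -> (forall y, perron y <= psi y) -> A x psi c <= 0) ->
  c <= perron x.
Proof.
move=> perron_le_c c_out c_in.
by have := perron_ge x (subsol_update perron_subsol perron_le_c c_out c_in); rewrite /= eqxx.
Qed.

Lemma perron_supersol : visc_supersol Omega X A g perron.
Proof.
split; first exact: perron_subsol.1.
split=> [x x_out | x x_in phi X_phi phi_le_perron].
  have /orP[//|perron_le_g] := le_total (g x) (perron x).
  by apply: (perron_maximal perron_le_g) => // /x_out.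
have [s [A_s _]] := A_zero x_in X_phi.
rewrite (A_ge0E A_nondecr A_zero x_in X_phi A_s).
have /orP[//|perron_le_s] := le_total s (perron x).
apply: (perron_maximal perron_le_s) => // _ psi X_psi perron_le_psi.
by rewrite -A_s; apply: A_noninc => // y; apply: le_trans (phi_le_perron y) (perron_le_psi y).
Qed.

Lemma perron_sol : visc_sol Omega X A g perron.
Proof. by split; [exact: perron_subsol | exact: perron_supersol]. Qed.

End Perron.

Section Duality.
Variables (R : realType) (N : nat) (Omega : set 'rV[R]_N) (X : set ('rV[R]_N -> R)).
Variables (A : 'rV[R]_N -> ('rV[R]_N -> R) -> R -> R) (g : 'rV[R]_N -> R).

Definition dual_set : set ('rV[R]_N -> R) := [set phi | X (- phi)].

Definition dual_op x (phi : 'rV[R]_N -> R) s := - A x (- phi) (- s).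

Lemma dual_noninc2 : A_noninc2 Omega X A -> A_noninc2 Omega dual_set dual_op.
Proof.
move=> A_noninc x s phi1 phi2 x_in X_phi1 X_phi2 le_phi12.
by rewrite lerN2; apply: A_noninc => // y; rewrite lerN2.
Qed.

Lemma dual_nondecr3 : A_nondecr3 Omega X A -> A_nondecr3 Omega dual_set dual_op.
Proof.
by move=> A_nondecr x phi s1 s2 x_in X_phi le_s12; rewrite lerN2; apply: A_nondecr; rewrite ?lerN2.
Qed.

Lemma dual_unique_zero : A_unique_zero Omega X A -> A_unique_zero Omega dual_set dual_op.
Proof.
move=> A_zero x phi x_in X_phi; have [t [A_t tE]] := A_zero _ _ x_in X_phi.
exists (- t); split=> [|r]; first by rewrite /dual_op opprK A_t oppr0.
by move=> /eqP; rewrite oppr_eq0 => /eqP /tE ->; rewrite opprK.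
Qed.

Lemma dual_subsolE u :
  visc_subsol Omega dual_set dual_op (- g) (- u) <-> visc_supersol Omega X A g u.
Proof.
rewrite /visc_subsol /visc_supersol bdd_funN /dual_set /dual_op /=.
split=> -[u_bdd [u_out u_in]]; (split; first by []); split.
- by move=> x /u_out; rewrite lerN2.
- move=> x x_in phi X_phi phi_le_u.
  have := u_in x x_in (- phi); rewrite !opprK oppr_le0; apply=> // y.
  by rewrite lerN2.
- by move=> x /u_out; rewrite lerN2.
- move=> x x_in phi X_phi u_le_phi; rewrite opprK oppr_le0.
  by apply: (u_in x x_in) => // y; rewrite lerNl; apply: u_le_phi.
Qed.

Lemma dual_supersolE u :
  visc_supersol Omega dual_set dual_op (- g) (- u) <-> visc_subsol Omega X A g u.
Proof.
rewrite /visc_subsol /visc_supersol bdd_funN /dual_set /dual_op /=.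
split=> -[u_bdd [u_out u_in]]; (split; first by []); split.
- by move=> x /u_out; rewrite lerN2.
- move=> x x_in phi X_phi u_le_phi.
  have := u_in x x_in (- phi); rewrite !opprK oppr_ge0; apply=> // y.
  by rewrite lerN2.
- by move=> x /u_out; rewrite lerN2.
- move=> x x_in phi X_phi phi_le_u; rewrite opprK oppr_ge0.
  by apply: (u_in x x_in) => // y; rewrite lerNr; apply: phi_le_u.
Qed.

End Duality.

Theorem mainTheorem1 (R : realType) (N : nat) (Omega : set 'rV[R]_N)
  (X : set ('rV[R]_N -> R)) (g : 'rV[R]_N -> R)
  (A : 'rV[R]_N -> ('rV[R]_N -> R) -> R -> R) :
  open Omega ->
  X `<=` @bdd_fun R N ->
  (exists M : R, forall x, ~ Omega x -> `|g x| <= M) ->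
  A_noninc2 Omega X A -> A_nondecr3 Omega X A -> A_unique_zero Omega X A ->
  ((exists v, visc_subsol Omega X A g v) /\
   (exists M : R, forall v, visc_subsol Omega X A g v -> forall y, v y <= M))
  \/
  ((exists v, visc_supersol Omega X A g v) /\
   (exists M : R, forall v, visc_supersol Omega X A g v -> forall y, M <= v y)) ->
  exists u, visc_sol Omega X A g u.
Proof.
move=> _ _ _ A_noninc A_nondecr A_zero.
case=> -[[v sol_v] [M sol_bound]].
  by exists (perron Omega X A g); apply: perron_sol sol_v sol_bound.
have dual_subsol_le w :
    visc_subsol Omega (dual_set X) (dual_op A) (- g) w -> forall y, w y <= - M.
  move=> dual_subsol_w y; have := sol_bound (- w); rewrite -dual_subsolE opprK.
  by move=> /(_ dual_subsol_w y) le_M; rewrite lerNr; exact: le_M.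
have dual_subsol_v : visc_subsol Omega (dual_set X) (dual_op A) (- g) (- v).
  by apply/dual_subsolE.
have [dual_subsol dual_supersol] :=
  perron_sol (dual_noninc2 A_noninc) (dual_nondecr3 A_nondecr) (dual_unique_zero A_zero)
    dual_subsol_v dual_subsol_le.
exists (- perron Omega (dual_set X) (dual_op A) (- g)).
by split; [apply/dual_supersolE | apply/dual_subsolE]; rewrite opprK.
Qed.
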